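(* Let $\pi$ be a permutation of $\{1,\dots,n\}$. A set $M$ of edges of $G(\pi)$ is an induced matching if and only if the corresponding set of matches can be ordered as a chain $e_1<e_2<\dots<e_k$. Consequently, the size of a maximum induced matching of $G(\pi)$ equals the maximum length of a chain of matches.
   Context: $\pi^{-1}(i)$ denotes the position of $i$ in $\pi$. The permutation graph $G(\pi)$ has vertex set $\{1,\dots,n\}$ and $uv$ is an edge iff $(u-v)(\pi^{-1}(u)-\pi^{-1}(v))<0$. A match is an ordered pair $(x,y)$ with $1\le x<y\le n$ and $\pi^{-1}(x)>\pi^{-1}(y)$; matches correspond bijectively to edges $xy$ of $G(\pi)$. For matches $e=(x,y)$ and $e'=(x',y')$ we write $e<e'$ if $y<x'$ and $\pi^{-1}(x)<\pi^{-1}(y')$. A chain is a sequence of matches $e_1,\dots,e_k$ with $e_i<e_{i+1}$ for all $1\le i<k$; its length is $k$. An induced matching of a graph $G=(V,E)$ is a set $M\subseteq E$ such that for any two distinct edges $u_1v_1,u_2v_2\in M$, none of $u_1u_2,u_1v_2,v_1u_2,v_1v_2$ is in $E$. *)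

(* Vertices {1,...,n} are represented by 'I_n = {0,...,n-1}. *)
From mathcomp Require Import all_boot all_fingroup.
Set Implicit Arguments. Unset Strict Implicit. Unset Printing Implicit Defensive.
Local Open Scope group_scope.

Section PermGraph.
Variable n : nat.
Variable pi : 'S_n.  (* pi maps positions to values *)

Definition pos (i : 'I_n) : nat := (pi^-1 i : 'I_n).

(* edge relation of G(pi): (u - v)(pi^-1 u - pi^-1 v) < 0 *)
Definition padj (u v : 'I_n) : bool :=
  ((u < v)%N && (pos v < pos u)%N) || ((v < u)%N && (pos u < pos v)%N).

Definition pedges : {set {set 'I_n}} :=
  [set [set u; v] | u in 'I_n, v in 'I_n & padj u v].

Definition is_match (e : 'I_n * 'I_n) : bool :=
  ((e.1 < e.2)%N && (pos e.2 < pos e.1)%N).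

Definition edge_of (e : 'I_n * 'I_n) : {set 'I_n} := [set e.1; e.2].

Definition match_lt (e e' : 'I_n * 'I_n) : bool :=
  ((e.2 < e'.1)%N && (pos e.1 < pos e'.2)%N).

Definition is_chain (s : seq ('I_n * 'I_n)) : bool :=
  all is_match s && sorted match_lt s.

Definition matches_of (M : {set {set 'I_n}}) : {set 'I_n * 'I_n} :=
  [set e | is_match e & edge_of e \in M].

End PermGraph.

Definition induced_matching (T : finType) (adj : rel T)
    (E M : {set {set T}}) : Prop :=
  M \subset E /\
  forall u1 v1 u2 v2 : T,
    [set u1; v1] \in M -> [set u2; v2] \in M -> [set u1; v1] != [set u2; v2] ->
    ~~ adj u1 u2 /\ ~~ adj u1 v2 /\ ~~ adj v1 u2 /\ ~~ adj v1 v2.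

From mathcomp Require Import all_boot all_fingroup zify.
Set Implicit Arguments. Unset Strict Implicit. Unset Printing Implicit Defensive.

(* The heart of the argument is a local characterization: two matches e, e'
   are "separated" (no endpoint of e is adjacent in G(pi) to an endpoint of e')
   if and only if they are comparable, e < e' or e' < e (separated_comparable).
   Non-adjacency of two vertices means that their values and their positions
   are ordered the same way (noadj_order), after which both directions are
   linear arithmetic.  Since edges of G(pi) and matches are in bijection, a set
   M of edges is an induced matching iff its matches are pairwise separated
   (induced_matchingE), i.e. pairwise comparable; the strict order < on matches
   is transitive, so such a set, sorted, is a chain, and conversely the
   elements of a chain are pairwise comparable.  The bijection also preserves
   cardinalities, so induced matchings and chains have the same attainable
   sizes, and the maximum chain length is the induced matching number. *)

Lemma sorted_reflexive_closure (T : eqType) (r : rel T) (s : seq T) :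
  uniq s -> sorted (fun x y => (x == y) || r x y) s -> sorted r s.
Proof.
case: s => // x s; elim: s x => // y s IH x /= /andP[x_notin y_uniq] /andP[xy ys].
have /negPf x_neq_y : x != y by apply: contraNneq x_notin => ->; rewrite inE eqxx.
by move: xy; rewrite x_neq_y /= => ->; exact: IH.
Qed.

Section ChainsOfMatches.
Variables (n : nat) (pi : 'S_n).

Lemma pos_inj : injective (pos pi).
Proof. by move=> u v /val_inj /perm_inj. Qed.

Lemma padjC u v : padj pi u v = padj pi v u.
Proof. by rewrite /padj orbC. Qed.

Lemma noadj_order u v : ~~ padj pi u v -> (u < v)%N = (pos pi u < pos pi v)%N.
Proof.
rewrite /padj; case: (eqVneq u v) => [->|u_neq_v]; first by rewrite !ltnn.
have /eqP pos_neq : pos pi u != pos pi v by apply: contra u_neq_v => /eqP/pos_inj->.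
have {u_neq_v} : (u : nat) <> v by move/val_inj/eqP; rewrite (negPf u_neq_v).
lia.
Qed.

Definition separated (e e' : 'I_n * 'I_n) : bool :=
  [&& ~~ padj pi e.1 e'.1, ~~ padj pi e.1 e'.2,
      ~~ padj pi e.2 e'.1 & ~~ padj pi e.2 e'.2].

Lemma separated_mem e e' a b : separated e e' ->
  a \in edge_of e -> b \in edge_of e' -> ~~ padj pi a b.
Proof.
case/and4P=> h11 h12 h21 h22.
by rewrite !inE => /orP[]/eqP-> /orP[]/eqP->.
Qed.

(* Key lemma: two matches are separated iff they are comparable.  Only the
   "crossed" pairs (x, y') and (y, x') matter for the forward direction. *)
Lemma separated_comparable e e' : is_match pi e -> is_match pi e' ->
  separated e e' = match_lt pi e e' || match_lt pi e' e.
Proof.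
case: e e' => [x y] [x' y']; rewrite /is_match /match_lt /separated /=.
move=> /andP[xy yx] /andP[xy' yx']; apply/idP/idP.
- case/and4P=> _ xy'_sep yx'_sep _.
  have := noadj_order xy'_sep; rewrite padjC in xy'_sep; have := noadj_order xy'_sep.
  have := noadj_order yx'_sep; rewrite padjC in yx'_sep; have := noadj_order yx'_sep.
  lia.
- rewrite /padj; lia.
Qed.

Lemma match_edge e : is_match pi e -> edge_of e \in pedges pi.
Proof.
by case: e => x y /andP[xy yx]; apply/imset2P; exists x y; rewrite // inE /padj xy yx.
Qed.

Lemma edge_match E : E \in pedges pi -> exists2 e, is_match pi e & edge_of e = E.
Proof.
case/imset2P=> u v _; rewrite inE /padj => /orP[]/andP[uv vu] ->.
- by exists (u, v); rewrite /is_match ?uv ?vu.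
- by exists (v, u); rewrite /is_match ?uv ?vu // /edge_of setUC.
Qed.

Lemma edge_of_inj : {in is_match pi &, injective (@edge_of n)}.
Proof.
case=> x y [x' y'] /andP[xy _] /andP[xy' _] same_edge.
have /[!inE] : x \in edge_of (x', y') by rewrite -same_edge !inE eqxx.
have /[!inE] : y \in edge_of (x', y') by rewrite -same_edge !inE eqxx orbT.
case/orP=> /eqP ey /orP[]/eqP ex; rewrite {}ex {}ey /= ?ltnn // in xy xy' *.
by move: xy xy'; lia.
Qed.

Lemma edge_of_matches_of (M : {set {set 'I_n}}) : M \subset pedges pi ->
  @edge_of n @: matches_of pi M = M.
Proof.
move=> /subsetP M_edges; apply/setP=> E; apply/imsetP/idP.
- by case=> e /[!inE] /andP[_ eM] ->.
- move=> EM; have [e e_match eE] := edge_match (M_edges E EM).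
  by exists e; rewrite // inE e_match eE.
Qed.

Lemma matches_of_edges (A : {set 'I_n * 'I_n}) : {subset A <= is_match pi} ->
  matches_of pi (@edge_of n @: A) = A.
Proof.
move=> A_matches; apply/setP=> e; rewrite inE; apply/andP/idP.
- case=> e_match /imsetP[e' e'A /edge_of_inj eq_e'].
  by rewrite (eq_e' e_match (A_matches _ e'A)).
- by move=> eA; split; [exact: A_matches | exact: imset_f].
Qed.

Lemma card_matches_of (M : {set {set 'I_n}}) : M \subset pedges pi ->
  #|matches_of pi M| = #|M|.
Proof.
move=> M_edges; rewrite -{2}(edge_of_matches_of M_edges) card_in_imset //.
by move=> e e' /[!inE] /andP[e_match _] /andP[e'_match _]; apply: edge_of_inj.
Qed.

Lemma induced_matchingE (M : {set {set 'I_n}}) : M \subset pedges pi ->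
  induced_matching (padj pi) (pedges pi) M <->
  {in matches_of pi M &, forall e e', e != e' -> separated e e'}.
Proof.
move=> M_edges; split.
- case=> _ induced e e' /[!inE] /andP[e_match eM] /andP[e'_match e'M] e_neq_e'.
  have edges_neq : edge_of e != edge_of e'.
    by apply: contra e_neq_e' => /eqP/edge_of_inj-> //.
  by case: (induced _ _ _ _ eM e'M edges_neq) => ? [? [? ?]]; apply/and4P.
- move=> sep; split=> // u1 v1 u2 v2 E1 E2 E1_neq_E2.
  have [e1 e1_match e1E] := edge_match (subsetP M_edges _ E1).
  have [e2 e2_match e2E] := edge_match (subsetP M_edges _ E2).
  have sep12 : separated e1 e2.
    apply: sep; rewrite ?inE ?e1_match ?e2_match ?e1E ?e2E //.
    by apply: contra E1_neq_E2; rewrite -e1E -e2E => /eqP->.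
  have in_edge (a b : 'I_n) : a \in [set a; b] /\ b \in [set a; b].
    by rewrite !inE !eqxx orbT.
  have [[u1E v1E] [u2E v2E]] := (in_edge u1 v1, in_edge u2 v2).
  rewrite -e1E in u1E v1E; rewrite -e2E in u2E v2E.
  by rewrite !(separated_mem sep12).
Qed.

Lemma match_lt_trans e' e e'' : is_match pi e' ->
  match_lt pi e e' -> match_lt pi e' e'' -> match_lt pi e e''.
Proof. by rewrite /is_match /match_lt; lia. Qed.

Lemma match_lt_irrefl e : is_match pi e -> ~~ match_lt pi e e.
Proof. by rewrite /is_match /match_lt; lia. Qed.

Lemma chain_uniq s : is_chain pi s -> uniq s.
Proof.
case/andP=> /allP s_matches s_sorted; apply: sorted_uniq_in s_sorted.
- by move=> e' e e'' /s_matches e'_match _ _; apply: match_lt_trans.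
- by move=> e /s_matches /match_lt_irrefl /negPf.
Qed.

Lemma chain_comparable s : is_chain pi s ->
  {in s &, forall e e', e != e' -> match_lt pi e e' || match_lt pi e' e}.
Proof.
case/andP=> s_matches s_sorted.
have : pairwise (match_lt pi) s.
  rewrite -(sorted_pairwise_in _ s_matches) //.
  by move=> e' e e'' e'_match _ _; apply: match_lt_trans.
elim: s {s_matches s_sorted} => //= x s IH /andP[x_lt_s s_pairwise] e e'.
rewrite !inE => /predU1P[->|es] /predU1P[->|e's]; rewrite ?eqxx //.
- by rewrite (allP x_lt_s).
- by rewrite (allP x_lt_s) ?orbT.
- exact: IH.
Qed.

Lemma comparable_chain (A : {set 'I_n * 'I_n}) : {subset A <= is_match pi} ->
  {in A &, forall e e', e != e' -> match_lt pi e e' || match_lt pi e' e} ->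
  exists s, [/\ uniq s, [set e in s] = A & is_chain pi s].
Proof.
move=> A_matches A_comparable.
pose le_match e e' := (e == e') || match_lt pi e e'.
pose s := sort le_match (enum A).
have mem_s e : (e \in s) = (e \in A) by rewrite mem_sort mem_enum.
have s_uniq : uniq s by rewrite sort_uniq enum_uniq.
exists s; split; first by [].
  by apply/setP=> e; rewrite inE mem_s.
apply/andP; split; first by apply/allP=> e; rewrite mem_s => /A_matches.
apply: sorted_reflexive_closure s_uniq _.
apply: (@sort_sorted_in _ (mem A)); last by apply/allP=> e; rewrite mem_enum.
move=> e e' eA e'A; rewrite /le_match eq_sym.
by case: (eqVneq e e') => //= e_neq_e'; exact: A_comparable.
Qed.

Lemma induced_matching_chainE (M : {set {set 'I_n}}) : M \subset pedges pi ->
  induced_matching (padj pi) (pedges pi) M <->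
  exists s, [/\ uniq s, [set e in s] = matches_of pi M & is_chain pi s].
Proof.
move=> M_edges; have match_of_M e : e \in matches_of pi M -> is_match pi e.
  by rewrite inE => /andP[].
rewrite induced_matchingE //; split=> [sep | [s [_ sM s_chain]] e e' eM e'M e_neq_e'].
- apply: comparable_chain => // e e' eM e'M e_neq_e'.
  by rewrite -separated_comparable ?match_of_M ?sep.
- rewrite separated_comparable ?match_of_M //.
  have mem_s x : (x \in s) = (x \in matches_of pi M) by rewrite -sM inE.
  by apply: (chain_comparable s_chain); rewrite ?mem_s.
Qed.

Lemma chain_size s : is_chain pi s -> #|[set e in s]| = size s.
Proof. by move=> /chain_uniq/card_uniqP <-; apply: eq_card => e; rewrite inE. Qed.

Lemma induced_matching_to_chain (M : {set {set 'I_n}}) :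
  induced_matching (padj pi) (pedges pi) M ->
  exists2 s, is_chain pi s & size s = #|M|.
Proof.
move=> M_induced; have M_edges : M \subset pedges pi by case: M_induced.
have [s [_ sM s_chain]] := proj1 (induced_matching_chainE M_edges) M_induced.
by exists s; rewrite // -chain_size // sM card_matches_of.
Qed.

Lemma chain_to_induced_matching s : is_chain pi s ->
  exists2 M, induced_matching (padj pi) (pedges pi) M & #|M| = size s.
Proof.
move=> s_chain; have s_matches : {subset [set e in s] <= is_match pi}.
  by case/andP: s_chain => /allP s_matches _ e /[!inE] /s_matches.
have sM := matches_of_edges s_matches.
have M_edges : @edge_of n @: [set e in s] \subset pedges pi.
  by apply/subsetP=> _ /imsetP[e /s_matches e_match ->]; apply: match_edge.
exists (@edge_of n @: [set e in s]).
  by apply/(induced_matching_chainE M_edges); exists s; rewrite chain_uniq.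
by rewrite -card_matches_of // sM chain_size.
Qed.

(* Since chains have no repetition, their length is bounded by the number of
   pairs of vertices; hence a longest chain exists. *)
Lemma longest_chain : exists2 k : nat,
  exists2 s, is_chain pi s & size s = k &
  forall s, is_chain pi s -> size s <= k.
Proof.
pose has_chain k := [exists t : k.-tuple ('I_n * 'I_n), is_chain pi t].
have has_chainP k : reflect (exists2 s, is_chain pi s & size s = k) (has_chain k).
  apply: (iffP existsP) => [[t t_chain] | [s s_chain /eqP s_size]].
    by exists t; rewrite ?size_tuple.
  by exists (Tuple s_size).
have exists_chain : exists k, has_chain k by exists 0; apply/has_chainP; exists [::].
have chain_bounded k : has_chain k -> k <= #|{: 'I_n * 'I_n}|.
  by case/has_chainP=> s s_chain <-; rewrite -chain_size // max_card.
case: (ex_maxnP exists_chain chain_bounded) => k /has_chainP longest maximal.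
by exists k => // s s_chain; apply/maximal/has_chainP; exists s.
Qed.
End ChainsOfMatches.

Theorem mainTheorem6 (n : nat) (pi : 'S_n) :
  (forall M : {set {set 'I_n}}, M \subset pedges pi ->
     (induced_matching (padj pi) (pedges pi) M <->
      exists s : seq ('I_n * 'I_n),
        [/\ uniq s, [set e in s] = matches_of pi M & is_chain pi s]))
  /\
  (exists k : nat,
     [/\ (exists M, induced_matching (padj pi) (pedges pi) M /\ #|M| = k),
         (forall M, induced_matching (padj pi) (pedges pi) M -> #|M| <= k),
         (exists s, is_chain pi s /\ size s = k) &
         (forall s, is_chain pi s -> size s <= k)]).
Proof.
split; first exact: induced_matching_chainE.
have [k [s s_chain s_size] longest] := longest_chain pi.
exists k; split.
- have [M M_induced M_size] := chain_to_induced_matching s_chain.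
  by exists M; rewrite M_size.
- move=> M /induced_matching_to_chain [s' s'_chain <-]; exact: longest.
- by exists s.
- exact: longest.
Qed.
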